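(* Let $\Delta=(\Gamma,\mathbf{R})$ be a theory such that $\bigcirc(B/A)\in\mathbf{R}^{\mathrm{o}}$, there is no $r\in\mathbf{R}^{\mathrm{o}}$ with $r\triangleright\bigcirc(B/A)$, and $\Diamond(A\wedge B\wedge C)\in\Gamma$, where $A,B,C$ are Boolean formulas. Then $\Delta\mid\sim\bigcirc(B/A\wedge C)$.
   Context: Boolean formulas over propositional letters; $\models_{\mathrm{PL}}$ classical entailment, $\models_{\mathrm{S5}}$ S5 entailment; $\Diamond A=\neg\Box\neg A$ and $w\models\Box A$ iff $A$ holds at all worlds. A theory is $\Delta=(\Gamma,\mathbf{R})$, $\Gamma$ a finite set of Boolean or alethic formulas, $\mathbf{R}=(\mathbf{R}^{\Rightarrow},\mathbf{R}^{\mathrm{o}})$, $\mathbf{R}^{\Rightarrow}$ a finite (coherent) set of normality conditionals and $\mathbf{R}^{\mathrm{o}}$ a finite set of obligations $\bigcirc(B/A)$ (body $b=A$, head $h=B$). Overriding (relative to $\Gamma$): $r_j\triangleright r_i$ iff (i) $\{h(r_i),h(r_j)\}\cup\Gamma\models_{\mathrm{S5}}\bot$; (ii) $b(r_j)\models_{\mathrm{PL}}b(r_i)$ and $b(r_i)\not\models_{\mathrm{PL}}b(r_j)$; (iii) $\{h(r_i),b(r_j)\}\not\models_{\mathrm{PL}}\bot$. An $\mathbf{R}$-ordered model is $(W,\succeq_N,\succeq_I,v)$ with $W\neq\emptyset$, valuation $v$, $\succeq_N$ the normality total preorder determined by $\mathbf{R}^{\Rightarrow}$ via the lexicographic ranking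 on falsified conditionals (coherence: no nonempty $X\subseteq\mathbf{R}^{\Rightarrow}$ has $\{A\rightarrow B:A\Rightarrow B\in X\}\models_{\mathrm{PL}}\bigwedge_{r\in X}\neg b(r)$; $\mathcal{E}_0=\mathbf{R}^{\Rightarrow}$, $\mathcal{E}_{i+1}=\{A\Rightarrow B\in\mathbf{R}^{\Rightarrow}:\mathrm{m}(\mathcal{E}_i)\models_{\mathrm{PL}}\neg A\}$ with $\mathrm{m}(X)=\{A\rightarrow B:A\Rightarrow B\in X\}$, $m$ the stabilization index, $\Delta_i=\mathcal{E}_i\setminus\mathcal{E}_{i+1}$, $\Delta_m=\mathcal{E}_m$; $w_1\succeq_N w_2$ iff $\langle|\Delta_{m-1}\cap F(w_1)|,\dots,|\Delta_0\cap F(w_1)|\rangle$ is lexicographically $\le$ the corresponding tuple for $w_2$, where $F(w)$ is the set of conditionals in $\mathbf{R}^{\Rightarrow}$ whose body holds and head fails at $w$), and $w_1\succeq_I w_2$ iff $V(w_1)\subseteq V(w_2)$ where $V(w)=\{r_i\in\mathbf{R}^{\mathrm{o}}:w\models b(r_i)\wedge\neg h(r_i)$ and $w\not\models b(r_j)$ for all $r_j\in\mathbf{R}^{\mathrm{o}}$ with $r_j\triangleright r_i\}$. $\max_{\succeq}(X)=\{w\in X:\forall u\in X(u\succeq w\Rightarrow w\succeq u)\}$. Lifting: $U\succeq_I^{s}U'$ iff for every $u'\in U'$ there is $u\in U$ with $u\succeq_I u'$. Truth: $w\models\bigcirc(B/A)$ iff $\max_{\succeq_N}(\Vert A\wedge\neg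 B\Vert)\not\succeq_I^{s}\max_{\succeq_N}(\Vert A\wedge B\Vert)$. $\Delta\mid\sim\varphi$ iff in every $\mathbf{R}$-ordered model every world satisfying all of $\Gamma$ satisfies $\varphi$. *)

From Stdlib Require Import List Arith Bool ClassicalEpsilon.
Import ListNotations.

Definition pb (P : Prop) : bool :=
  if excluded_middle_informative P then true else false.

Inductive bform : Type :=
| BVar : nat -> bform
| BTop : bform
| BBot : bform
| BNeg : bform -> bform
| BAnd : bform -> bform -> bform
| BOr  : bform -> bform -> bform
| BImp : bform -> bform -> bform.

Fixpoint beval (v : nat -> bool) (f : bform) : bool :=
  match f with
  | BVar n => v n
  | BTop => true
  | BBot => false
  | BNeg a => negb (beval v a)
  | BAnd a b => beval v a && beval v b
  | BOr a b => beval v a || beval v b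
  | BImp a b => negb (beval v a) || beval v b
  end.

Definition pl_ent (Sigma : list bform) (phi : bform) : Prop :=
  forall v : nat -> bool,
    (forall psi, In psi Sigma -> beval v psi = true) -> beval v phi = true.

Definition bigand (l : list bform) : bform := fold_right BAnd BTop l.

Inductive aform : Type :=
| AVar : nat -> aform
| ATop : aform
| ABot : aform
| ANeg : aform -> aform
| AAnd : aform -> aform -> aform
| AOr  : aform -> aform -> aform
| AImp : aform -> aform -> aform
| ABox : aform -> aform.

Definition ADia (a : aform) : aform := ANeg (ABox (ANeg a)).

Fixpoint emb (f : bform) : aform :=
  match f with
  | BVar n => AVar n
  | BTop => ATop
  | BBot => ABot
  | BNeg a => ANeg (emb a)
  | BAnd a b => AAnd (emb a) (emb b)
  | BOr a b => AOr (emb a) (emb b)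
  | BImp a b => AImp (emb a) (emb b)
  end.

(* S5 semantics: universal accessibility; w |= Box A iff A at all worlds *)
Fixpoint aeval {W : Type} (v : W -> nat -> bool) (w : W) (f : aform) : Prop :=
  match f with
  | AVar n => v w n = true
  | ATop => True
  | ABot => False
  | ANeg a => ~ aeval v w a
  | AAnd a b => aeval v w a /\ aeval v w b
  | AOr a b => aeval v w a \/ aeval v w b
  | AImp a b => aeval v w a -> aeval v w b
  | ABox a => forall u : W, aeval v u a
  end.

Definition s5_ent (Sigma : list aform) (phi : aform) : Prop :=
  forall (W : Type) (v : W -> nat -> bool) (w : W),
    (forall psi, In psi Sigma -> aeval v w psi) -> aeval v w phi.

(* a rule is a pair (body, head); A => B is (A,B); O(B/A) is (A,B) *)
Definition rule := (bform * bform)%type.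
Definition body (r : rule) : bform := fst r.
Definition head (r : rule) : bform := snd r.
Definition obl (B A : bform) : rule := (A, B).

Record theory := mkTheory {
  Gamma : list aform;          (* Boolean (embedded) or alethic formulas *)
  Rn : list rule;              (* normality conditionals R^=> *)
  Ro : list rule               (* obligations R^o *)
}.

Definition mat (X : list rule) : list bform :=
  map (fun r => BImp (body r) (head r)) X.

(* coherence: no nonempty X subset of R^=> with m(X) |= /\_{r in X} ~ b(r) *)
Definition coherent (R : list rule) : Prop :=
  forall P : rule -> bool,
    filter P R <> [] ->
    ~ pl_ent (mat (filter P R)) (bigand (map (fun r => BNeg (body r)) (filter P R))).

(* well-formed theory: R^=> coherent; rule lists represent finite sets *)
Definition theory_wf (D : theory) : Prop :=
  coherent (Rn D) /\ NoDup (Rn D) /\ NoDup (Ro D).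

(* membership in E_i : E_0 = R, E_{i+1} = { r in R : m(E_i) |= ~ b(r) } *)
Fixpoint inE (R : list rule) (i : nat) (r : rule) : bool :=
  match i with
  | O => true
  | S i' => pb (pl_ent (mat (filter (inE R i') R)) (BNeg (body r)))
  end.

Definition E (R : list rule) (i : nat) : list rule := filter (inE R i) R.

(* stabilization index: least i with E_{i+1} = E_i (found within |R| steps) *)
Fixpoint stab_search (R : list rule) (k i : nat) : nat :=
  if pb (E R (S i) = E R i) then i
  else match k with
       | O => i
       | S k' => stab_search R k' (S i)
       end.

Definition stab (R : list rule) : nat := stab_search R (length R) 0.

Definition Dl (R : list rule) (i : nat) : list rule :=
  filter (fun r => inE R i r && negb (inE R (S i) r)) R.

Definition falsifies (val : nat -> bool) (r : rule) : bool :=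
  beval val (body r) && negb (beval val (head r)).

Definition rank_tuple (R : list rule) (val : nat -> bool) : list nat :=
  map (fun i => length (filter (falsifies val) (Dl R i))) (rev (seq 0 (stab R))).

Fixpoint lexle (a b : list nat) : bool :=
  match a, b with
  | x :: a', y :: b' => Nat.ltb x y || (Nat.eqb x y && lexle a' b')
  | _, _ => true
  end.

Definition geN (D : theory) {W : Type} (v : W -> nat -> bool) (w1 w2 : W) : Prop :=
  lexle (rank_tuple (Rn D) (v w1)) (rank_tuple (Rn D) (v w2)) = true.

Definition overrides (D : theory) (rj ri : rule) : Prop :=
  s5_ent (emb (head ri) :: emb (head rj) :: Gamma D) ABot /\
  (pl_ent [body rj] (body ri) /\ ~ pl_ent [body ri] (body rj)) /\
  ~ pl_ent [head ri; body rj] BBot.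

Definition bsat {W : Type} (v : W -> nat -> bool) (w : W) (f : bform) : Prop :=
  beval (v w) f = true.

Definition inV (D : theory) {W : Type} (v : W -> nat -> bool) (w : W) (ri : rule) : Prop :=
  In ri (Ro D) /\ bsat v w (body ri) /\ ~ bsat v w (head ri) /\
  (forall rj, In rj (Ro D) -> overrides D rj ri -> ~ bsat v w (body rj)).

Definition geI (D : theory) {W : Type} (v : W -> nat -> bool) (w1 w2 : W) : Prop :=
  forall r, inV D v w1 r -> inV D v w2 r.

Definition maxset {W : Type} (ge : W -> W -> Prop) (X : W -> Prop) (w : W) : Prop :=
  X w /\ (forall u, X u -> ge u w -> ge w u).

Definition lift {W : Type} (ge : W -> W -> Prop) (U U' : W -> Prop) : Prop :=
  forall u', U' u' -> exists u, U u /\ ge u u'.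

Definition ext {W : Type} (v : W -> nat -> bool) (f : bform) : W -> Prop :=
  fun w => bsat v w f.

(* w |= O(B/A)  (independent of w) *)
Definition obl_true (D : theory) {W : Type} (v : W -> nat -> bool) (B A : bform) : Prop :=
  ~ lift (geI D v)
      (maxset (geN D v) (ext v (BAnd A (BNeg B))))
      (maxset (geN D v) (ext v (BAnd A B))).

Inductive form : Type :=
| FAl  : aform -> form
| FObl : bform -> bform -> form     (* FObl B A = O(B/A) *)
| FNeg : form -> form
| FAnd : form -> form -> form
| FOr  : form -> form -> form
| FImp : form -> form -> form.

Fixpoint feval (D : theory) {W : Type} (v : W -> nat -> bool) (w : W) (f : form) : Prop :=
  match f with
  | FAl a => aeval v w a
  | FObl B A => obl_true D v B A
  | FNeg a => ~ feval D v w a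
  | FAnd a b => feval D v w a /\ feval D v w b
  | FOr a b => feval D v w a \/ feval D v w b
  | FImp a b => feval D v w a -> feval D v w b
  end.

(* Delta |~ phi : in every R-ordered model (W nonempty, valuation v; the
   orders >=_N, >=_I are determined by R and v), every world satisfying
   all of Gamma satisfies phi *)
Definition nm_cons (D : theory) (phi : form) : Prop :=
  forall (W : Type) (v : W -> nat -> bool),
    inhabited W ->
    forall w : W, (forall g, In g (Gamma D) -> aeval v w g) -> feval D v w phi.

(* The diamond in Gamma yields a world satisfying A /\ C /\ B.  Rank tuples have
   a fixed length and are compared lexicographically, so among such worlds some
   u' is N-greatest, hence in max_N ||(A /\ C) /\ B||.  Any u in
   max_N ||(A /\ C) /\ ~B|| violates O(B/A), which nothing overrides, so
   O(B/A) is in V(u); were V(u) included in V(u'), u' would violate B. *)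
From Stdlib Require Import List Arith Lia Classical.

Lemma aeval_emb {W : Type} (v : W -> nat -> bool) (w : W) (f : bform) :
  aeval v w (emb f) <-> beval (v w) f = true.
Proof.
  induction f; simpl; try tauto.
  - split; [tauto | discriminate].
  - rewrite IHf. destruct (beval (v w) f); simpl; intuition congruence.
  - rewrite IHf1, IHf2, Bool.andb_true_iff. tauto.
  - rewrite IHf1, IHf2, Bool.orb_true_iff. tauto.
  - rewrite IHf1, IHf2.
    destruct (beval (v w) f1), (beval (v w) f2); simpl; intuition congruence.
Qed.

Lemma aeval_dia_emb {W : Type} (v : W -> nat -> bool) (w : W) (f : bform) :
  aeval v w (ADia (emb f)) -> exists u, beval (v u) f = true.
Proof.
  intro Hdia. apply NNPP. intro Hnone. apply Hdia. intros u Hu.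
  apply Hnone. exists u. apply aeval_emb, Hu.
Qed.

Lemma exists_least_nat (P : nat -> Prop) :
  (exists n, P n) -> exists n, P n /\ forall m, P m -> n <= m.
Proof.
  intros [n Hn]. induction n as [n IH] using lt_wf_ind.
  destruct (classic (exists m, P m /\ m < n)) as [[m [Hm Hlt]] | Hnone].
  - exact (IH m Hlt Hm).
  - exists n. split; [exact Hn |]. intros m Hm.
    destruct (le_lt_dec n m) as [Hle | Hlt]; [exact Hle |].
    exfalso. apply Hnone. eauto.
Qed.

Lemma lexle_least_exists (k : nat) (S : list nat -> Prop) :
  (forall l, S l -> length l = k) -> (exists l, S l) ->
  exists l0, S l0 /\ forall l, S l -> lexle l0 l = true.
Proof.
  revert S. induction k as [| k IH]; intros S Hlen [l Hl].
  - exists l. split; [exact Hl |]. intros l' _.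
    destruct l; [reflexivity | discriminate (Hlen _ Hl)].
  - destruct (exists_least_nat (fun n => exists t, S (n :: t)))
      as [n0 [[t Ht] Hleast]].
    { destruct l as [| x t]; [discriminate (Hlen _ Hl) | eauto]. }
    destruct (IH (fun t => S (n0 :: t))) as [t0 [Ht0 Ht0least]].
    + intros t' Ht'. specialize (Hlen _ Ht'). simpl in Hlen. lia.
    + eauto.
    + exists (n0 :: t0). split; [exact Ht0 |].
      intros [| y t'] Hl'; [discriminate (Hlen _ Hl') |].
      assert (Hle : n0 <= y) by (apply Hleast; eauto).
      simpl. destruct (Nat.eq_dec n0 y) as [<- | Hne].
      * rewrite Nat.eqb_refl, (Ht0least t' Hl'). apply Bool.orb_true_r.
      * replace (Nat.ltb n0 y) with true by (symmetry; apply Nat.ltb_lt; lia).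
        reflexivity.
Qed.

Lemma geN_greatest_exists (D : theory) {W : Type} (v : W -> nat -> bool)
    (X : W -> Prop) :
  (exists w, X w) -> exists w, X w /\ forall u, X u -> geN D v w u.
Proof.
  intros [w0 Hw0].
  destruct (lexle_least_exists (stab (Rn D))
              (fun l => exists u, X u /\ l = rank_tuple (Rn D) (v u)))
    as [l0 [[w [Hw ->]] Hleast]].
  - intros l [u [_ ->]]. unfold rank_tuple.
    rewrite length_map, length_rev, length_seq. reflexivity.
  - eauto.
  - exists w. split; [exact Hw |]. intros u Hu. apply Hleast. eauto.
Qed.

Lemma maxset_of_greatest {W : Type} (ge : W -> W -> Prop) (X : W -> Prop) (w : W) :
  X w -> (forall u, X u -> ge w u) -> maxset ge X w.
Proof. intros Hw Hgreatest. split; [exact Hw |]. intros u Hu _. auto. Qed.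

Lemma inV_of_violated (D : theory) {W : Type} (v : W -> nat -> bool) (w : W)
    (A B : bform) :
  In (obl B A) (Ro D) -> (~ exists r, In r (Ro D) /\ overrides D r (obl B A)) ->
  bsat v w A -> ~ bsat v w B -> inV D v w (obl B A).
Proof.
  intros Hin Hnot HA HnB.
  repeat split; auto.
  intros r Hr Hover. exfalso. eauto.
Qed.

Lemma obl_true_of_stronger_body (D : theory) {W : Type} (v : W -> nat -> bool)
    (A A' B : bform) :
  In (obl B A) (Ro D) ->
  (~ exists r, In r (Ro D) /\ overrides D r (obl B A)) ->
  (forall u, bsat v u A' -> bsat v u A) ->
  (exists u, bsat v u (BAnd A' B)) ->
  obl_true D v B A'.
Proof.
  intros Hin Hnot HA'A Hsat Hlift.
  destruct (geN_greatest_exists D v (ext v (BAnd A' B)) Hsat)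
    as [w [Hw Hgreatest]].
  destruct (Hlift w (maxset_of_greatest _ _ _ Hw Hgreatest))
    as [u [[Hu _] Hge]].
  unfold ext, bsat in Hu, Hw. simpl in Hu, Hw.
  apply Bool.andb_true_iff in Hu as [HuA' HuB].
  apply Bool.andb_true_iff in Hw as [_ HwB].
  assert (HV : inV D v u (obl B A)).
  { apply inV_of_violated; [exact Hin | exact Hnot | now apply HA'A |].
    apply Bool.negb_true_iff in HuB. unfold bsat. rewrite HuB. discriminate. }
  destruct (Hge _ HV) as [_ [_ [HwnotB _]]].
  exact (HwnotB HwB).
Qed.

Theorem proposition6 (D : theory) (A B C : bform) :
  theory_wf D ->
  In (obl B A) (Ro D) ->
  (~ exists r, In r (Ro D) /\ overrides D r (obl B A)) ->
  In (ADia (emb (BAnd A (BAnd B C)))) (Gamma D) ->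
  nm_cons D (FObl B (BAnd A C)).
Proof.
  intros _ Hin Hnot Hdia W v _ w HGamma.
  destruct (aeval_dia_emb v w _ (HGamma _ Hdia)) as [u0 Hu0].
  simpl in Hu0. rewrite !Bool.andb_true_iff in Hu0.
  apply obl_true_of_stronger_body with (A := A); auto.
  - intros u Hu. unfold bsat in *. simpl in Hu.
    apply Bool.andb_true_iff in Hu. tauto.
  - exists u0. unfold bsat. simpl. rewrite !Bool.andb_true_iff. tauto.
Qed.
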